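(* Let $p\in\mathbb{R}$, $K:=\{z=(v,m,\sigma,e)\in Z: v\otimes v-\sigma=e\,\mathrm{Id},\ m=(e+p)v\}$, and let $K'\subset K$ be compact. For any $z\in\operatorname{int}(K')^{co}$ there exists $\bar z\in\Lambda$ such that $[z-\bar z,z+\bar z]\subset\operatorname{int}(K')^{co}$ and $|\bar z|\ge\frac{1}{2N}d(z,K')$, where $N=\dim Z$.
   Context: $\mathcal S_0^{2\times2}$ is the space of traceless symmetric $2\times2$ matrices, $Z:=\mathbb{R}^2\times\mathbb{R}^2\times\mathcal S_0^{2\times2}\times\mathbb{R}$, $d$ is the Euclidean distance on $Z$, $(K')^{co}$ the convex hull. The wave cone is $\Lambda=\{\bar z=(\bar v,\bar m,\bar\sigma,\bar e)\in Z:\ (\bar v,\bar e)\neq0\text{ and there is }0\ne(\xi,c)\in\mathbb{R}^2\times\mathbb{R}\text{ with }(\bar\sigma+\bar e\,\mathrm{Id})\xi+c\bar v=0,\ \bar v\cdot\xi=0,\ \bar m\cdot\xi+c\bar e=0\}$. *)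

From HB Require Import structures.
From mathcomp Require Import all_boot all_order all_algebra.
From mathcomp Require Import all_classical all_reals all_analysis.
Set Implicit Arguments. Unset Strict Implicit. Unset Printing Implicit Defensive.
Import Order.TTheory GRing.Theory Num.Theory.
Import numFieldNormedType.Exports.
Local Open Scope classical_set_scope.
Local Open Scope ring_scope.

(* The space Z = R^2 x R^2 x S_0^{2x2} x R is represented by its coordinates
   in R^7 : z = (v1, v2, m1, m2, s11, s12, e), where the traceless symmetric
   matrix sigma is [[s11, s12], [s12, -s11]]. *)
Definition Z (R : realType) := 'rV[R]_7.
Definition dimZ : nat := 7.

Section Coords.
Variable R : realType.
Implicit Types z : Z R.

Definition zc z (k : nat) : R := z ord0 (inord k).
Definition vof z : 'rV[R]_2 := \row_(i < 2) zc z i.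
Definition mof z : 'rV[R]_2 := \row_(i < 2) zc z (2 + i).
Definition sigof z : 'M[R]_2 :=
  \matrix_(i < 2, j < 2)
    (if i == j then (if (i : nat) == 0%N then zc z 4 else - zc z 4) else zc z 5).
Definition eof z : R := zc z 6.

Definition znorm z : R :=
  Num.sqrt (\sum_(i < 2) (vof z ord0 i) ^+ 2 + \sum_(i < 2) (mof z ord0 i) ^+ 2
            + \sum_(i < 2) \sum_(j < 2) (sigof z i j) ^+ 2 + (eof z) ^+ 2).
Definition zdist z (A : set (Z R)) : R := inf [set znorm (z - k) | k in A].

Definition zinterior (A : set (Z R)) : set (Z R) :=
  [set z | exists2 r : R, 0 < r & forall w, znorm (w - z) < r -> A w].

Definition conv_hull (A : set (Z R)) : set (Z R) :=
  [set x | exists n (l : 'I_n -> R) (a : 'I_n -> Z R),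
      (forall i, 0 <= l i) /\ (forall i, A (a i)) /\
      \sum_(i < n) l i = 1 /\ x = \sum_(i < n) l i *: a i].

Definition Kset (p : R) : set (Z R) :=
  [set z | (vof z)^T *m vof z - sigof z = (eof z)%:M
           /\ mof z = (eof z + p) *: vof z].

Definition wave_cone : set (Z R) :=
  [set zb | (vof zb != 0 \/ eof zb != 0) /\
     exists (xi : 'cV[R]_2) (c : R), (xi != 0 \/ c != 0) /\
       (sigof zb + (eof zb)%:M) *m xi + c *: (vof zb)^T = 0 /\
       (vof zb *m xi) ord0 ord0 = 0 /\
       (mof zb *m xi) ord0 ord0 + c * eof zb = 0].
End Coords.

From HB Require Import structures.
From mathcomp Require Import all_boot all_order all_algebra.
From mathcomp Require Import all_classical all_reals all_analysis.
From mathcomp Require Import ring lra.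
Import Order.TTheory GRing.Theory Num.Theory.
Import numFieldNormedType.Exports.
Set Implicit Arguments. Unset Strict Implicit. Unset Printing Implicit Defensive.
Local Open Scope classical_set_scope.
Local Open Scope ring_scope.

(* By Caratheodory, z is a convex combination of at most dim Z + 1 = 8 points
   a_i of K'.  Let a_k carry the largest weight and let w = l_j (a_j - a_k) be
   the longest of the vectors l_i (a_i - a_k).  Moving the weight l_j between
   a_j and a_k keeps all weights nonnegative, so z + c w lies in the hull for
   |c| <= 1, while z - a_k = sum_i l_i (a_i - a_k) gives d(z, K') <= 8 |w|.
   Since K is a graph over v, the difference of two distinct points of K lies
   in the wave cone, hence so does w (if w = 0 then z lies in K' and a short
   chord of K' through z is used instead).  Shrinking w to 3/4 w moves the
   whole segment into the interior, and 3/4 >= 8 / (2 * 7). *)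

Section WeightedNorm.
Variables (R : rcfType) (n : nat) (w : 'I_n -> R).
Hypothesis w_ge0 : forall i, 0 <= w i.

Lemma weighted_CauchySchwarz (x y : 'I_n -> R) :
  (\sum_i w i * (x i * y i)) ^+ 2 <=
  (\sum_i w i * x i ^+ 2) * (\sum_i w i * y i ^+ 2).
Proof.
pose F i := w i * x i ^+ 2; pose G i := w i * y i ^+ 2; pose H i := w i * (x i * y i).
have Lagrange : \sum_i \sum_j w i * w j * (x i * y j - x j * y i) ^+ 2 =
    2 * ((\sum_i F i) * (\sum_i G i) - (\sum_i H i) ^+ 2).
  transitivity (\sum_i \sum_j (F i * G j + F j * G i - H i * H j *+ 2)).
    by apply: eq_bigr => i _; apply: eq_bigr => j _; rewrite /F /G /H; ring.
  under eq_bigr do rewrite sumrB big_split /= sumrMnl.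
  rewrite sumrB big_split /= sumrMnl [X in _ + X - _]exchange_big /= -!big_distrlr /=.
  by rewrite -mulr_natl expr2; ring.
suff : 0 <= \sum_i \sum_j w i * w j * (x i * y j - x j * y i) ^+ 2.
  by rewrite Lagrange pmulr_rge0 // subr_ge0.
by apply: sumr_ge0 => i _; apply: sumr_ge0 => j _; rewrite mulr_ge0 ?sqr_ge0 ?mulr_ge0.
Qed.

Definition wnorm (x : 'rV[R]_n) : R := Num.sqrt (\sum_i w i * x 0 i ^+ 2).

Lemma wnorm_ge0 x : 0 <= wnorm x.
Proof. exact: sqrtr_ge0. Qed.

Lemma wnormZ (c : R) x : wnorm (c *: x) = `|c| * wnorm x.
Proof.
rewrite /wnorm -sqrtr_sqr -sqrtrM ?sqr_ge0 // mulr_sumr.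
by congr Num.sqrt; apply: eq_bigr => i _; rewrite mxE; ring.
Qed.

Lemma wnormD x y : wnorm (x + y) <= wnorm x + wnorm y.
Proof.
have sum_ge0 (u : 'rV[R]_n) : 0 <= \sum_i w i * u 0 i ^+ 2.
  by apply: sumr_ge0 => i _; rewrite mulr_ge0 ?sqr_ge0.
have CS : \sum_i w i * (x 0 i * y 0 i) <= wnorm x * wnorm y.
  rewrite -sqrtrM ?sum_ge0 // (le_trans (ler_norm _)) // -sqrtr_sqr.
  exact/ler_wsqrtr/weighted_CauchySchwarz.
rewrite -(ger0_norm (addr_ge0 (wnorm_ge0 x) (wnorm_ge0 y))) -sqrtr_sqr ler_sqrt ?sqr_ge0 //.
rewrite sqrrD !sqr_sqrtr ?sum_ge0 //.
under eq_bigr do rewrite mxE sqrrD !mulrDr.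
by rewrite !big_split /= mulr2n lerD2r lerD2l lerD.
Qed.

End WeightedNorm.

Lemma affine_dependence (F : fieldType) m n (a : 'I_n -> 'rV[F]_m) : (m.+1 < n)%N ->
  exists mu : 'I_n -> F,
    [/\ exists i, mu i != 0, \sum_i mu i = 0 & \sum_i mu i *: a i = 0].
Proof.
move=> lt_mn; pose M : 'M[F]_(n, m + 1) := row_mx (\matrix_i a i) (const_mx 1).
have : kermx M != 0.
  by rewrite -mxrank_eq0 mxrank_ker subn_eq0 -ltnNge (leq_ltn_trans (rank_leq_col M)) ?addn1.
case/rowV0Pn => u /sub_kermxP; rewrite mul_mx_row -row_mx0 => /eq_row_mx [uA u1] /rV0Pn [i ui].
exists (u 0); split; first by exists i.
- have := congr1 (fun v : 'rV_1 => v 0 0) u1; rewrite !mxE => sum_u.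
  by rewrite -[RHS]sum_u; apply: eq_bigr => j _; rewrite mxE mulr1.
- by rewrite -[RHS]uA mulmx_sum_row; under [RHS]eq_bigr do rewrite rowK.
Qed.

Lemma sum_eq0_exists_gt0 (R : realDomainType) (I : finType) (mu : I -> R) :
  \sum_i mu i = 0 -> (exists i, mu i != 0) -> exists i, 0 < mu i.
Proof.
move=> sum0 [i mu_i]; case: (pickP (fun j => 0 < mu j)) => [j ?|no_pos]; first by exists j.
have Nmu_ge0 j : 0 <= - mu j by rewrite oppr_ge0 leNgt no_pos.
have sumN0 : \sum_j - mu j = 0 by rewrite sumrN sum0 oppr0.
have /eqP := psumr_eq0P (fun j _ => Nmu_ge0 j) sumN0 (isT : xpredT i).
by rewrite oppr_eq0 (negbTE mu_i).
Qed.

Section ZSpace.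
Variable R : realType.
Implicit Types x y z : Z R.

(* Each of s11, s12 occurs twice in the Frobenius norm of sigma. *)
Definition zweight (i : 'I_7) : R := if (4 <= i <= 5)%N then 2 else 1.

Lemma znormE x : znorm x = wnorm zweight x.
Proof.
rewrite /znorm /wnorm.
rewrite [in RHS](eq_bigr (fun i : 'I_7 => zweight i * zc x i ^+ 2)); last first.
  by move=> i _; rewrite /zc inord_val.
rewrite /vof /mof /sigof /eof !big_ord_recr !big_ord0 /= !mxE /= /zweight /=.
by rewrite addn0 addn1 sqrrN; congr Num.sqrt; ring.
Qed.

Lemma znorm_ge0 x : 0 <= znorm x.
Proof. by rewrite znormE wnorm_ge0. Qed.

Lemma znormZ (c : R) x : znorm (c *: x) = `|c| * znorm x.
Proof. by rewrite !znormE wnormZ. Qed.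

Lemma znorm0 : znorm (0 : Z R) = 0.
Proof. by rewrite -(scale0r (0 : Z R)) znormZ normr0 mul0r. Qed.

Lemma znormN x : znorm (- x) = znorm x.
Proof. by rewrite -scaleN1r znormZ normrN normr1 mul1r. Qed.

Lemma znormD x y : znorm (x + y) <= znorm x + znorm y.
Proof.
by rewrite !znormE wnormD // => i; rewrite /zweight; case: ifP.
Qed.

Lemma znorm_sum n (F : 'I_n -> Z R) : znorm (\sum_i F i) <= \sum_i znorm (F i).
Proof.
elim/big_ind2: _ => [|x1 x2 y1 y2 le1 le2|//]; first by rewrite znorm0.
exact: le_trans (znormD _ _) (lerD le1 le2).
Qed.

Lemma zcB x y k : zc (x - y) k = zc x k - zc y k.
Proof. by rewrite /zc !mxE. Qed.

Lemma zcZ (c : R) x k : zc (c *: x) k = c * zc x k.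
Proof. by rewrite /zc mxE. Qed.

Lemma vofZ (c : R) x : vof (c *: x) = c *: vof x.
Proof. by apply/rowP => i; rewrite !mxE zcZ. Qed.

Lemma mofZ (c : R) x : mof (c *: x) = c *: mof x.
Proof. by apply/rowP => i; rewrite !mxE zcZ. Qed.

Lemma sigofZ (c : R) x : sigof (c *: x) = c *: sigof x.
Proof.
by apply/matrixP => i j; rewrite !mxE !zcZ; case: ifP => //; case: ifP => // _ _; rewrite mulrN.
Qed.

Lemma eofZ (c : R) x : eof (c *: x) = c * eof x.
Proof. exact: zcZ. Qed.

Lemma wave_coneZ (c : R) x : c != 0 -> wave_cone x -> wave_cone (c *: x).
Proof.
move=> c0 [vx [xi [d [xid [eq_sig [eq_v eq_m]]]]]].
split.
  by rewrite vofZ eofZ scaler_eq0 mulf_eq0 (negbTE c0).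
exists xi, d; split=> //; rewrite vofZ mofZ sigofZ eofZ; split; last split.
- rewrite -scale_scalar_mx -scalerDr -scalemxAl linearZ /= scalerA mulrC -scalerA.
  by rewrite -scalerDr eq_sig scaler0.
- by rewrite -scalemxAl mxE eq_v mulr0.
- by rewrite -scalemxAl mxE mulrCA -mulrDr eq_m mulr0.
Qed.

Lemma zc_inj x y : (forall k, (k < 7)%N -> zc x k = zc y k) -> x = y.
Proof.
by move=> eq_xy; apply/rowP => k; have := eq_xy k (ltn_ord k); rewrite /zc inord_val.
Qed.

Section Kset.
Variable p : R.

Lemma Kset_coords a : Kset p a ->
  [/\ zc a 6 = (zc a 0 ^+ 2 + zc a 1 ^+ 2) / 2,
      zc a 4 = (zc a 0 ^+ 2 - zc a 1 ^+ 2) / 2,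
      zc a 5 = zc a 0 * zc a 1,
      zc a 2 = (zc a 6 + p) * zc a 0 &
      zc a 3 = (zc a 6 + p) * zc a 1].
Proof.
case=> /matrixP eq_sig /rowP eq_m.
move: (eq_sig 0 0) (eq_sig 0 1) (eq_sig 1 1) (eq_m 0) (eq_m 1).
rewrite !mxE !big_ord1 !mxE /= /eof addn0 addn1 mulr1n mulr0n.
by move=> e00 e01 e11 m0 m1; split; rewrite ?expr2; lra.
Qed.

Lemma Kset_v_inj a b : Kset p a -> Kset p b ->
  zc a 0 = zc b 0 -> zc a 1 = zc b 1 -> a = b.
Proof.
move=> /Kset_coords [a6 a4 a5 a2 a3] /Kset_coords [b6 b4 b5 b2 b3] e0 e1.
have e6 : zc a 6 = zc b 6 by rewrite a6 b6 e0 e1.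
apply: zc_inj => k.
do 7 (case: k => [|k]; first by rewrite ?a6 ?b6 ?a4 ?b4 ?a5 ?b5 ?a2 ?b2 ?a3 ?b3 ?e0 ?e1 ?e6).
by [].
Qed.

Lemma wave_cone_diff a b : Kset p a -> Kset p b -> a != b -> wave_cone (a - b).
Proof.
move=> Ka Kb neq_ab.
have dv_neq0 : zc a 0 - zc b 0 != 0 \/ zc a 1 - zc b 1 != 0.
  rewrite !subr_eq0; case: (eqVneq (zc a 0) (zc b 0)) => e0; last by left.
  case: (eqVneq (zc a 1) (zc b 1)) => e1; last by right.
  by move/negP: neq_ab; case; apply/eqP; apply: Kset_v_inj e0 e1.
case: (Kset_coords Ka) (Kset_coords Kb) => [a6 a4 a5 a2 a3] [b6 b4 b5 b2 b3].
split.
  by left; apply/rV0Pn; case: dv_neq0 => ?; [exists 0 | exists 1]; rewrite !mxE zcB.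
(* xi is v_a - v_b turned by a right angle and c = - det (v_a, v_b). *)
exists (\col_i (if i == 0 then zc b 1 - zc a 1 else zc a 0 - zc b 0)).
exists (zc a 1 * zc b 0 - zc a 0 * zc b 1).
split; [left | split; [|split]].
- apply/cV0Pn; case: dv_neq0 => dv_neq0; [exists 1 | exists 0].
    by rewrite !mxE.
  by rewrite !mxE /= -opprB oppr_eq0.
- apply/(@matrixP R 2 1) => i j; rewrite !mxE !big_ord_recr big_ord0 /= !mxE /eof !zcB.
  by case: i => [[|[|//]] ?]; rewrite /= ?mulr1n ?mulr0n a4 a5 a6 b4 b5 b6; field.
- by rewrite !mxE !big_ord_recr big_ord0 /= !mxE /= !zcB; ring.
- rewrite !mxE !big_ord_recr big_ord0 /= !mxE /= /eof !zcB addn0 addn1.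
  by rewrite a2 a3 b2 b3 a6 b6; field.
Qed.

End Kset.
End ZSpace.

Section ConvexHull.
Variable R : realType.
Implicit Types (A : set (Z R)) (x y z : Z R).

Definition is_conv_comb A n (l : 'I_n -> R) (a : 'I_n -> Z R) x :=
  (forall i, 0 <= l i) /\ (forall i, A (a i)) /\
  \sum_(i < n) l i = 1 /\ x = \sum_(i < n) l i *: a i.

Lemma conv_comb_shrink A n (l : 'I_n.+1 -> R) a x : (dimZ.+1 < n.+1)%N ->
  is_conv_comb A l a x -> exists l' (a' : 'I_n -> Z R), is_conv_comb A l' a' x.
Proof.
move=> lt_n [l_ge0 [Aa [sum_l ->]]].
have [mu [mu_neq0 sum_mu sum_mu_a]] := affine_dependence a lt_n.
have [j0 mu_j0] := sum_eq0_exists_gt0 sum_mu mu_neq0.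
have [i0 mu_i0 min_i0] := @arg_minP _ R _ j0 (fun i => 0 < mu i) (fun i => l i / mu i) mu_j0.
set t := l i0 / mu i0.
pose l' i := l i - t * mu i.
have l'_ge0 i : 0 <= l' i.
  rewrite /l' subr_ge0; case: (ltP 0 (mu i)) => [mu_i|mu_i].
    by rewrite -ler_pdivlMr // min_i0.
  by apply: le_trans (l_ge0 i); rewrite mulr_ge0_le0 // divr_ge0 ?l_ge0 ?ltW.
have l'_i0 : l' i0 = 0 by rewrite /l' /t divfK ?subrr // gt_eqF.
have sum_l' : \sum_i l' i = 1 by rewrite sumrB -mulr_sumr sum_mu mulr0 subr0.
have sum_l'a : \sum_i l i *: a i = \sum_i l' i *: a i.
  under [RHS]eq_bigr do rewrite scalerBl -scalerA.
  by rewrite sumrB -scaler_sumr sum_mu_a scaler0 subr0.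
exists (fun j => l' (lift i0 j)), (fun j => a (lift i0 j)).
split; [by [] | split; [by [] | split]].
- by move: sum_l'; rewrite (bigD1_ord i0) // l'_i0 /= add0r.
- by rewrite sum_l'a (bigD1_ord i0) // l'_i0 scale0r /= add0r.
Qed.

Lemma caratheodory A x : conv_hull A x ->
  exists n (l : 'I_n -> R) (a : 'I_n -> Z R), (n <= dimZ.+1)%N /\ is_conv_comb A l a x.
Proof.
case=> n; elim: n => [|n IH] [l [a comb]]; first by exists 0%N, l, a.
have [le_n | lt_n] := leqP n.+1 dimZ.+1; first by exists n.+1, l, a.
have [l' [a' comb']] := conv_comb_shrink lt_n comb.
by apply: IH; exists l', a'.
Qed.

Lemma conv_hull_convex A x y (s : R) : conv_hull A x -> conv_hull A y ->
  0 <= s <= 1 -> conv_hull A ((1 - s) *: x + s *: y).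
Proof.
case=> n [l [a [l_ge0 [Aa [sum_l ->]]]]] [m [l' [a' [l'_ge0 [Aa' [sum_l' ->]]]]]].
move=> /andP [s_ge0 s_le1].
pose mix T (f : 'I_n -> T) (g : 'I_m -> T) k :=
  match fintype.split k with inl i => f i | inr j => g j end.
exists (n + m)%N, (mix _ (fun i => (1 - s) * l i) (fun j => s * l' j)), (mix _ a a').
split; [|split; [|split]].
- by move=> k; rewrite /mix; case: (fintype.split k) => i; rewrite mulr_ge0 ?subr_ge0.
- by move=> k; rewrite /mix; case: (fintype.split k).
- rewrite big_split_ord /= /mix.
  under eq_bigr do rewrite (unsplitK (inl _ _)).
  under [X in _ + X]eq_bigr do rewrite (unsplitK (inr _ _)).
  by rewrite -!mulr_sumr sum_l sum_l' !mulr1 subrK.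
- rewrite big_split_ord /= /mix.
  under [X in _ = X + _]eq_bigr do rewrite (unsplitK (inl _ _)) -scalerA.
  under [X in _ = _ + X]eq_bigr do rewrite (unsplitK (inr _ _)) -scalerA.
  by rewrite -!scaler_sumr.
Qed.

Lemma sumr_delta n (j : 'I_n) : \sum_i ((i == j)%:R : R) = 1.
Proof. by rewrite (bigD1 j) //= eqxx big1 ?addr0 // => i /negbTE ->. Qed.

Lemma sumr_deltaZ n (j : 'I_n) (F : 'I_n -> Z R) : \sum_i ((i == j)%:R : R) *: F i = F j.
Proof.
by rewrite (bigD1 j) //= eqxx scale1r big1 ?addr0 // => i /negbTE ->; rewrite scale0r.
Qed.

Lemma conv_comb_transfer A n (l : 'I_n -> R) a x j k (c : R) :
  is_conv_comb A l a x -> l j <= l k -> `|c| <= 1 ->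
  conv_hull A (x + c *: (l j *: (a j - a k))).
Proof.
move=> [l_ge0 [Aa [sum_l ->]]] le_jk; rewrite ler_norml => /andP [c_ge c_le].
exists n, (fun i => l i + c * l j * ((i == j)%:R - (i == k)%:R)), a.
split; [|split; [by [] | split]].
- move=> i; move: (l_ge0 i) (l_ge0 j) le_jk.
  by case: (eqVneq i j) => [-> | _]; case: (eqVneq _ k) => [-> | _] /=; nra.
- by rewrite big_split /= -mulr_sumr sumrB !sumr_delta subrr mulr0 addr0.
- under [RHS]eq_bigr do rewrite scalerDl -scalerA.
  rewrite big_split -scaler_sumr /=; under [X in _ = _ + _ *: X]eq_bigr do rewrite scalerBl.
  by rewrite sumrB !sumr_deltaZ scalerA.
Qed.

Lemma zdist_le A z a : A a -> zdist z A <= znorm (z - a).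
Proof.
move=> Aa; apply: ge_inf; last by exists a.
by exists 0 => _ [b _ <-]; apply: znorm_ge0.
Qed.

Lemma zdist_le_conv_comb A n (l : 'I_n -> R) a z k (M : R) :
  is_conv_comb A l a z -> (forall i, znorm (l i *: (a i - a k)) <= M) ->
  zdist z A <= n%:R * M.
Proof.
move=> [l_ge0 [Aa [sum_l z_eq]]] le_M.
have -> : n%:R * M = \sum_(i < n) M by rewrite sumr_const card_ord mulr_natl.
apply: le_trans (zdist_le z (Aa k)) _.
have -> : z - a k = \sum_i l i *: (a i - a k).
  by under eq_bigr do rewrite scalerBr; rewrite sumrB -scaler_suml sum_l scale1r -z_eq.
exact: le_trans (znorm_sum _) (ler_sum _ (fun i _ => le_M i)).
Qed.

Lemma zinterior_segment A z w (s : R) : zinterior (conv_hull A) z -> 0 <= s < 1 ->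
  conv_hull A (z + w) -> conv_hull A (z - w) ->
  forall t, -1 <= t <= 1 -> zinterior (conv_hull A) (z + t *: (s *: w)).
Proof.
case=> r r_gt0 ball_z /andP [s_ge0 s_lt1] zDw zBw t /andP [t_ge t_le].
exists ((1 - s) * r) => [|u near_u]; first by rewrite mulr_gt0 // subr_gt0.
pose q := if 0 <= t then z + w else z - w.
have q_in : conv_hull A q by rewrite /q; case: ifP.
set sig := s * `|t|.
have sig_ge0 : 0 <= sig by rewrite mulr_ge0.
have sig_le : sig <= s by rewrite /sig ler_piMr // ler_norml t_ge t_le.
have sig_lt1 : 1 - sig != 0 by apply/eqP; lra.
have y_eq : z + t *: (s *: w) = (1 - sig) *: z + sig *: q.
  apply/rowP => i; rewrite /sig /q; case: ifP => [t_ge0 | /negbT t_lt0].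
    by rewrite ger0_norm // !mxE; ring.
  by rewrite ltr0_norm ?ltNge // !mxE; ring.
pose h := (1 - sig)^-1 *: (u - (z + t *: (s *: w))).
have h_in : conv_hull A (z + h).
  apply: ball_z; rewrite addrAC subrr add0r /h znormZ ger0_norm ?invr_ge0; last lra.
  rewrite ltr_pdivrMl; last lra.
  by apply: lt_le_trans near_u _; rewrite ler_wpM2r //; lra.
have -> : u = (1 - sig) *: (z + h) + sig *: q.
  by apply/rowP => i; move/rowP/(_ i): y_eq; rewrite /h !mxE => ->; field.
by apply: conv_hull_convex => //; rewrite sig_ge0; lra.
Qed.

Lemma znorm_small_multiple (v : Z R) (r : R) : 0 < r ->
  exists2 e : R, 0 < e & znorm (e *: v) < r.
Proof.
move=> r_gt0; have N_ge0 := znorm_ge0 v.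
exists (r / (1 + znorm v)); first by rewrite divr_gt0 //; lra.
rewrite znormZ ger0_norm; last by rewrite divr_ge0 //; lra.
by rewrite mulrAC ltr_pdivrMr; nra.
Qed.

Lemma zinterior_conv_hull_nontrivial A z a : zinterior (conv_hull A) z ->
  exists2 b, A b & b != a.
Proof.
case=> r r_gt0 ball_z.
case: (pselect (exists2 b, A b & b != a)) => // only_a; exfalso.
have hull_a y : conv_hull A y -> y = a.
  case=> n [l [c [_ [Ac [sum_l ->]]]]].
  have c_a i : c i = a by apply/eqP/negPn/negP => neq; apply: only_a; exists (c i).
  by under eq_bigr do rewrite c_a; rewrite -scaler_suml sum_l scale1r.
pose v : Z R := const_mx 1.
have [e e_gt0 small] := znorm_small_multiple v r_gt0.
have /hull_a z_a : conv_hull A z by apply: ball_z; rewrite subrr znorm0.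
have /hull_a : conv_hull A (z + e *: v) by apply: ball_z; rewrite addrAC subrr add0r.
rewrite z_a -[RHS]addr0 => /addrI /eqP; rewrite scaler_eq0 gt_eqF //=.
by move=> /eqP /rowP /(_ 0); rewrite !mxE => /eqP; rewrite oner_eq0.
Qed.

End ConvexHull.

Lemma exists_wave_chord (R : realType) (p : R) (K' : set (Z R)) z :
  K' `<=` Kset p -> zinterior (conv_hull K') z ->
  exists w, [/\ wave_cone w, conv_hull K' (z + w), conv_hull K' (z - w)
                & zdist z K' <= dimZ.+1%:R * znorm w].
Proof.
move=> K'K hz; have z_in : conv_hull K' z.
  by case: hz => r r_gt0 ball_z; apply: ball_z; rewrite subrr znorm0.
have [n [l [a [le_n comb]]]] := caratheodory z_in.
case: n l a le_n comb => [|n] l a le_n comb.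
  by case: comb => _ [_ [/eqP]]; rewrite big_ord0 eq_sym oner_eq0.
have Aa i : K' (a i) by case: comb => _ [].
have [k _ max_k] := @arg_maxP _ R _ ord0 xpredT l isT.
pose f i := znorm (l i *: (a i - a k)).
have [j _ max_j] := @arg_maxP _ R _ ord0 xpredT f isT.
have dist_le : zdist z K' <= dimZ.+1%:R * f j.
  apply: le_trans (zdist_le_conv_comb comb (fun i => max_j i isT)) _.
  by rewrite ler_wpM2r ?znorm_ge0 // ler_nat.
have [w0 | w_neq0] := eqVneq (l j *: (a j - a k)) 0.
  have [b Kb b_neq] := zinterior_conv_hull_nontrivial (a k) hz.
  case: hz => r r_gt0 ball_z.
  have [e e_gt0 small] := znorm_small_multiple (b - a k) r_gt0.
  exists (e *: (b - a k)); split.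
  - apply: wave_coneZ; first by rewrite gt_eqF.
    exact: wave_cone_diff (K'K _ Kb) (K'K _ (Aa k)) b_neq.
  - by apply: ball_z; rewrite addrAC subrr add0r.
  - by apply: ball_z; rewrite addrAC subrr add0r znormN.
  - by rewrite (le_trans dist_le) // /f w0 znorm0 mulr0 mulr_ge0 ?znorm_ge0.
move: (w_neq0); rewrite scaler_eq0 negb_or subr_eq0 => /andP [lj_neq0 neq_jk].
exists (l j *: (a j - a k)); split => //.
- by apply: wave_coneZ lj_neq0 _; apply: wave_cone_diff neq_jk; apply: K'K.
- rewrite -[X in z + X]scale1r.
  by apply: conv_comb_transfer comb (max_k j isT) _; rewrite normr1.
- by rewrite -scaleN1r; apply: conv_comb_transfer comb (max_k j isT) _; rewrite normrN1.
Qed.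

Theorem corollary2p4 (R : realType) (p : R) (K' : set (Z R))
  (hK'K : K' `<=` Kset p) (hK'c : compact K') (z : Z R)
  (hz : zinterior (conv_hull K') z) :
  exists2 zb : Z R, wave_cone zb &
    (forall t : R, -1 <= t <= 1 -> zinterior (conv_hull K') (z + t *: zb)) /\
    (2 * dimZ%:R)^-1 * zdist z K' <= znorm zb.
Proof.
have [w [w_wave zDw zBw dist_le]] := exists_wave_chord hK'K hz.
exists ((3 / 4) *: w).
  by apply: wave_coneZ => //; rewrite mulf_neq0 ?invr_eq0 ?pnatr_eq0.
split; first by apply: zinterior_segment => //; apply/andP; split; lra.
rewrite znormZ ger0_norm; last lra.
have := znorm_ge0 w; rewrite /dimZ in dist_le *; lra.
Qed.
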